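(* Let $\Gamma$ be a metrized graph with adequate vertex set $V(\Gamma)$ and $D=\sum_{s\in V(\Gamma)}a_s s$ a divisor with $\deg D\neq-2$. Let $x,y\in\Gamma$. (1) If $x,y$ lie on the same edge $e$ and $e$ is a bridge, then $g_{\mu_D}(x,y)=\tau_D(x,y)-\tfrac12|x-y|$. Now let $x\in e_i$, $y\in e_j$, $e_i\neq e_j$, with $e_i$ of length $L_i$ and endpoints $p_i$ (coordinate $0$), $q_i$ (coordinate $L_i$), $e_j$ of length $L_j$ and endpoints $p_j$ (coordinate $0$), $q_j$ (coordinate $L_j$), and suppose at least one of $e_i,e_j$ is a bridge. (2) If both are bridges, then $g_{\mu_D}(x,y)$ equals $\tau_D(x,y)-\tfrac12(x+y+r(p_i,p_j))$ if $p_i$ and $p_j$ lie between $x$ and $y$; $\tau_D(x,y)-\tfrac12(x-y+L_j+r(p_i,q_j))$ if $p_i$ and $q_j$ lie between $x$ and $y$; $\tau_D(x,y)-\tfrac12(-x+y+L_i+r(q_i,p_j))$ if $q_i$ and $p_j$ lie between $x$ and $y$; $\tau_D(x,y)-\tfrac12(-x-y+L_i+L_j+r(q_i,q_j))$ if $q_i$ and $q_j$ lie between $x$ and $y$. (3) If $e_i$ is a bridge and $e_j$ is not, then \[g_{\mu_D}(x,y)=\begin{cases}\tau_D(x,y)+y^2\dfrac{L_j-r(p_j,q_j)}{2L_j^2}-\tfrac12T_1&\text{if }y\in\Gamma_{p_i},\\[2mm]\tau_D(x,y)+y^2\dfrac{L_j-r(p_j,q_j)}{2L_j^2}-\tfrac12T_2&\text{if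 }y\in\Gamma_{q_i},\end{cases}\] where $T_1=y\frac{L_j-r(p_j,q_j)+r(p_i,q_j)-r(p_i,p_j)}{L_j}+x+r(p_i,p_j)$ and $T_2=y\frac{L_j-r(p_j,q_j)+r(q_i,q_j)-r(q_i,p_j)}{L_j}-x+L_i+r(q_i,p_j)$. (The case where only $e_j$ is a bridge is symmetric.)
   Context: A metrized graph $\Gamma$ is a finite connected graph each of whose edges is identified with a closed interval $[0,L]$; a point on an edge with endpoints $p$ (at $0$) and $q$ (at $L$) is identified with its coordinate in $[0,L]$. A vertex set is a nonempty finite set containing all points of valence $\neq 2$; it is adequate if there are no loops or parallel edges. An edge $e$ with endpoints $p,q$ is a bridge if deleting its interior disconnects $\Gamma$; then $\Gamma_p$ (resp. $\Gamma_q$) denotes the component of the remainder containing $p$ (resp. $q$). For bridges $e_i,e_j$, ''$u$ and $w$ lie between $x$ and $y$'' means the path from $x$ to $y$ passes through the endpoints $u$ of $e_i$ and $w$ of $e_j$. $j_z(x,y)$ is the voltage function (Chinburg–Rumely): $\Delta_x j_z(x,y)=\delta_y-\delta_z$, $j_z(z,y)=0$; continuous, symmetric in $x,y$, nonnegative. $r(x,y):=j_y(x,x)$ is the resistance function, and $j_s(x,y)=\tfrac12(r(s,x)+r(s,y)-r(x,y))$. For a signed measure $\mu$ with $\mu(\Gamma)=1$, $g_\mu(x,y)=\int j_z(x,y)d\mu(z)-\int_{\Gamma^3}j_z(x,y)d\mu(z)d\mu(x)d\mu(y)$. $\mu_{\mathrm{can}}$ is the unique such measure with $\int j_z(x,x)d\mu(z)$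 constant in $x$, and $\tau(\Gamma)$ is half that constant. Divisors $D=\sum a_s s$ have integer coefficients and support in $V(\Gamma)$. The admissible measure is $\mu_D=\frac{1}{\deg D+2}(\sum a_s\delta_s+2\mu_{\mathrm{can}})$, and $g_{\mu_D}$ is the associated Arakelov–Green function; it is known that $g_{\mu_D}(x,y)=\frac{1}{\deg D+2}\big(\sum_s a_sj_s(x,y)+4\tau(\Gamma)-r(x,y)\big)-c_{\mu_D}$ with $c_{\mu_D}=\frac{1}{2(\deg D+2)^2}\big(8\tau(\Gamma)(\deg D+1)+\sum_{s,t}a_sa_tr(s,t)\big)$. With $r(D,x)=\sum_s a_s r(s,x)$, the tau function is $\tau_D(x,y)=\frac{1}{\deg D+2}\big(4\tau(\Gamma)+\tfrac12(r(D,x)+r(D,y))\big)-c_{\mu_D}$. *)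

From HB Require Import structures.
From mathcomp Require Import all_boot all_order all_algebra.
From mathcomp Require Import all_classical all_reals all_analysis.
Set Implicit Arguments.
Unset Strict Implicit.
Unset Printing Implicit Defensive.
Import Order.TTheory GRing.Theory Num.Theory.
Import numFieldNormedType.Exports.
Local Open Scope classical_set_scope.
Local Open Scope ring_scope.

(* A metrized graph is given by a finite vertex set [vert], a finite    *)
(* edge set [edge], and for each edge e its endpoints [src e] (the     *)
(* gpoint with coordinate 0, called p in the paper) and [tgt e] (the    *)
(* gpoint with coordinate [len e], called q) and its length [len e].    *)
Record mgraph (R : realType) := MGraph {
  vert : finType;
  edge : finType;
  src : edge -> vert;
  tgt : edge -> vert;
  len : edge -> R }.

Definition adj R (G : mgraph R) : rel (vert G) :=
  [rel u v | [exists e, ((src e == u) && (tgt e == v)) ||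
                        ((src e == v) && (tgt e == u))]].
Definition adj_wo R (G : mgraph R) (e0 : edge G) : rel (vert G) :=
  [rel u v | [exists e, (e != e0) && (((src e == u) && (tgt e == v)) ||
                                      ((src e == v) && (tgt e == u)))]].

(* Gamma is a metrized graph with vertex set V(Gamma) = vert G: positive *)
(* lengths, nonempty vertex set, connected.  (Points in the interior of *)
(* an edge have valence 2, so vert G contains all points of valence     *)
(* <> 2.)                                                               *)
Definition is_metrized_graph R (G : mgraph R) : Prop :=
  [/\ forall e : edge G, 0 < len e,
      (0 < #|vert G|)%N
    & forall u v : vert G, connect (@adj _ G) u v].

Definition adequate R (G : mgraph R) : Prop :=
  (forall e : edge G, src e != tgt e) /\
  (forall e e' : edge G,
     ((src e == src e') && (tgt e == tgt e')) ||
     ((src e == tgt e') && (tgt e == src e')) -> e = e').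

Definition bridge R (G : mgraph R) (e : edge G) : Prop :=
  ~~ connect (adj_wo e) (src e) (tgt e).

Inductive gpoint R (G : mgraph R) :=
  | PV of vert G
  | PE of edge G & R.

Definition valid_point R (G : mgraph R) (x : gpoint G) : Prop :=
  match x with
  | PV _ => True
  | PE e t => 0 < t < len e
  end.

Definition pt R (G : mgraph R) (e : edge G) (t : R) : gpoint G :=
  if t == 0 then PV (src e)
  else if t == len e then PV (tgt e)
  else PE e t.

(* x in Gamma_w, for a vertex w and an edge e0: x lies in the connected *)
(* component containing w of Gamma minus the interior of e0.           *)
Definition in_comp R (G : mgraph R) (e0 : edge G) (w : vert G)
    (x : gpoint G) : Prop :=
  match x with
  | PV v => connect (adj_wo e0) w v
  | PE e t => e != e0 /\ connect (adj_wo e0) w (src e)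
  end.

(* For a bridge e with endpoints p = src e, q = tgt e and the gpoint x   *)
(* of e with coordinate t: "p lies between x and y" (the path from x to *)
(* y passes through p), resp. "q lies between x and y".                *)
Definition src_between R (G : mgraph R) (e : edge G) (t : R)
    (y : gpoint G) : Prop := t = 0 \/ in_comp e (src e) y.
Definition tgt_between R (G : mgraph R) (e : edge G) (t : R)
    (y : gpoint G) : Prop := t = len e \/ in_comp e (tgt e) y.

Definition rslope (R : realType) (g : R -> R) (t : R) : R :=
  lim ((fun h => (g (t + h) - g t) / h) @ 0^'+).
Definition lslope (R : realType) (g : R -> R) (t : R) : R :=
  lim ((fun h => (g (t - h) - g t) / h) @ 0^'+).

Definition ind (R : realType) (P : Prop) : R := if `[< P >] then 1 else 0.

(* [is_voltage f y z]: f : Gamma -> R is continuous, piecewise linear    *)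
(* (f'' = 0 away from y and z), with Laplacian                           *)
(*   Delta f = - f'' dx - sum_p sigma_p(f) delta_p = delta_y - delta_z,  *)
(* sigma_p(f) being the sum of the outgoing derivatives of f at p, and   *)
(* normalized by f z = 0.                                                *)
Definition is_voltage R (G : mgraph R) (f : gpoint G -> R)
    (y z : gpoint G) : Prop :=
  [/\ f z = 0,
      (* continuity along every edge (with values at the endpoints given *)
      (* by the vertex values, this is continuity on Gamma)              *)
      forall e : edge G,
        {within `[0, len e], continuous (fun t => f (pt e t))},
      forall (e : edge G) (a b : R), 0 <= a -> a < b -> b <= len e ->
        (forall c, a < c < b -> pt e c <> y /\ pt e c <> z) ->
        exists al be : R, forall t, a <= t <= b -> f (pt e t) = al + be * t,
      forall v : vert G,
        \sum_(e | src e == v) rslope (fun t => f (pt e t)) 0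
        + \sum_(e | tgt e == v) lslope (fun t => f (pt e t)) (len e)
        = ind R (z = PV v) - ind R (y = PV v)
    &
      forall (e : edge G) (t : R), 0 < t < len e ->
        rslope (fun u => f (pt e u)) t + lslope (fun u => f (pt e u)) t
        = ind R (z = PE e t) - ind R (y = PE e t)].

(* [voltage_fun j]: j z x y is the voltage function j_z(x, y), i.e. for *)
(* all points y, z of Gamma, x |-> j z x y satisfies                     *)
(* Delta_x j_z(x,y) = delta_y - delta_z and j_z(z,y) = 0.                *)
Definition voltage_fun R (G : mgraph R) (j : gpoint G -> gpoint G -> gpoint G -> R)
  : Prop :=
  forall y z : gpoint G, valid_point y -> valid_point z ->
    is_voltage (fun x => j z x y) y z.

Definition resist R (G : mgraph R) (j : gpoint G -> gpoint G -> gpoint G -> R)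
  (x y : gpoint G) : R := j y x x.

(* A measure of the form  sum_v c_v delta_v + sum_e rho_e(t) dt  (gpoint *)
(* masses at vertices, continuous densities on edges); mu_can is of    *)
(* this form.                                                           *)
Definition integ R (G : mgraph R) (c : vert G -> R) (rho : edge G -> R -> R)
    (f : gpoint G -> R) : R :=
  \sum_v c v * f (PV v)
  + \sum_e (\int[lebesgue_measure]_(t in `[0, len e]) (rho e t * f (pt e t))).

(* [is_tau j tau]: tau = tau(Gamma), i.e. 2 tau is the constant value of *)
(* x |-> \int j_z(x,x) d mu_can(z), mu_can the (unique) measure of total *)
(* mass 1 for which this is constant.                                    *)
Definition is_tau R (G : mgraph R) (j : gpoint G -> gpoint G -> gpoint G -> R)
    (tau : R) : Prop :=
  exists (c : vert G -> R) (rho : edge G -> R -> R),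
    [/\ forall e, {within `[0, len e], continuous (rho e)},
        integ c rho (fun _ => 1) = 1
      & forall x : gpoint G, valid_point x ->
          integ c rho (fun z => j z x x) = 2 * tau].

Definition degD R (G : mgraph R) (a : vert G -> int) : int := \sum_s a s.

Definition cmuD R (G : mgraph R) (j : gpoint G -> gpoint G -> gpoint G -> R)
    (tau : R) (a : vert G -> int) : R :=
  (2 * ((degD a)%:~R + 2) ^+ 2)^-1 *
  (8 * tau * ((degD a)%:~R + 1)
   + \sum_s \sum_t (a s)%:~R * (a t)%:~R * resist j (PV s) (PV t)).

Definition gmuD R (G : mgraph R) (j : gpoint G -> gpoint G -> gpoint G -> R)
    (tau : R) (a : vert G -> int) (x y : gpoint G) : R :=
  ((degD a)%:~R + 2)^-1 *
    (\sum_s (a s)%:~R * j (PV s) x y + 4 * tau - resist j x y)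
  - cmuD j tau a.

Definition rD R (G : mgraph R) (j : gpoint G -> gpoint G -> gpoint G -> R)
    (a : vert G -> int) (x : gpoint G) : R :=
  \sum_s (a s)%:~R * resist j (PV s) x.

Definition tauD R (G : mgraph R) (j : gpoint G -> gpoint G -> gpoint G -> R)
    (tau : R) (a : vert G -> int) (x y : gpoint G) : R :=
  ((degD a)%:~R + 2)^-1 * (4 * tau + (rD j a x + rD j a y) / 2)
  - cmuD j tau a.

From HB Require Import structures.
From mathcomp Require Import all_boot all_order all_algebra.
From mathcomp Require Import all_classical all_reals all_analysis.
From mathcomp Require Import ring lra.
Import Order.TTheory GRing.Theory Num.Theory.
Import numFieldNormedType.Exports.
Local Open Scope ring_scope.

Set Implicit Arguments.
Unset Strict Implicit.
Unset Printing Implicit Defensive.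

(* Green's identity for piecewise linear functions on the metrized graph (on each
   edge, [sum_p f(p) sigma_p(g)] equals [- \int f' g'], so it is symmetric in [f]
   and [g]), tested against the voltage functions, gives a representation
   formula: if [Delta f = sum_i w_i delta_{p_i}] then
   [f(z) - f(w) = sum_i w_i j_w(p_i, z)].  For [f = j_a(., b)] this yields
   reciprocity, the symmetry of [r] and [j_s(x,y) = (r(s,x) + r(s,y) - r(x,y))/2],
   hence [g_{mu_D} = tau_D - r / 2], and the theorem reduces to computing
   [r(x,y)].  For the potential of a unit current through a bridge, which is
   constant on each side of the bridge, the formula gives [r(x,w) = t + r(p,w)]
   when [x] is at distance [t] from the endpoint [p] facing [w]; for the tent
   function of an edge it gives the resistance from an interior point of an edge
   to a vertex. *)

Lemma sumr_single (I : finType) (V : nmodType) (i0 : I) (P : pred I) (X : I -> V) :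
  (forall i, i != i0 -> X i = 0) -> \sum_(i | P i) X i = if P i0 then X i0 else 0.
Proof.
move=> X0; rewrite big_mkcond (bigD1 i0) //= big1 ?addr0 // => i ii0.
by rewrite X0 //; case: (P i).
Qed.

Section PiecewiseAffine.
Variable R : realType.
Implicit Types (F H : R -> R) (Q : seq R).

Definition affine_on F (a b be : R) :=
  exists al, forall t, a <= t <= b -> F t = al + be * t.

Lemma affine_on_sub F a b a' b' be : a <= a' -> b' <= b ->
  affine_on F a b be -> affine_on F a' b' be.
Proof.
move=> aa' b'b [al Fa]; exists al => t /andP [a't tb']; apply: Fa.
by rewrite (le_trans aa' a't) (le_trans tb' b'b).
Qed.

Lemma rslope_affine F a b be : a < b -> affine_on F a b be -> rslope F a = be.
Proof.
move=> ab [al Fa]; rewrite /rslope; apply: (lim_near_cst (@Rhausdorff R)).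
near=> h.
have h0 : 0 < h by near: h; exact: nbhs_right_gt.
have hb : h < b - a by near: h; apply: nbhs_right_lt; rewrite subr_gt0.
rewrite !Fa; first by field; rewrite gt_eqF.
- by rewrite lexx ltW.
- by apply/andP; split; lra.
Unshelve. all: by end_near.
Qed.

Lemma lslope_affine F a b be : a < b -> affine_on F a b be -> lslope F b = - be.
Proof.
move=> ab [al Fa]; rewrite /lslope; apply: (lim_near_cst (@Rhausdorff R)).
near=> h.
have h0 : 0 < h by near: h; exact: nbhs_right_gt.
have hb : h < b - a by near: h; apply: nbhs_right_lt; rewrite subr_gt0.
rewrite !Fa; first by field; rewrite gt_eqF.
- by rewrite lexx ltW.
- by apply/andP; split; lra.
Unshelve. all: by end_near.
Qed.

Definition pw_affine F Q a b := forall a' b', a <= a' -> a' < b' -> b' <= b ->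
  {in Q, forall c, ~~ (a' < c < b')} -> exists be, affine_on F a' b' be.

Lemma pw_affine_l F Q a b c : c <= b -> pw_affine F Q a b ->
  pw_affine F [seq x <- Q | x < c] a c.
Proof.
move=> cb FQ a' b' aa' a'b' b'c Q'; apply: FQ => //; first exact: le_trans cb.
move=> d dQ; case: (ltP d c) => dc; first by apply: Q'; rewrite mem_filter dc.
by apply/negP => /andP [_ /lt_le_trans/(_ (le_trans b'c dc))]; rewrite ltxx.
Qed.

Lemma pw_affine_r F Q a b c : a <= c -> pw_affine F Q a b ->
  pw_affine F [seq x <- Q | c < x] c b.
Proof.
move=> ac FQ a' b' ca' a'b' b'b Q'; apply: FQ => //; first exact: le_trans ca'.
move=> d dQ; case: (ltP c d) => cd; first by apply: Q'; rewrite mem_filter cd.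
by apply/negP => /andP [/(le_lt_trans ca')]; rewrite ltNge cd.
Qed.

(* For piecewise affine [F] and [H] this is [- \int_a^b F' H'], hence symmetric. *)
Definition flux_pairing F H a b Q :=
  F a * rslope H a + F b * lslope H b
  + \sum_(c <- Q) F c * (rslope H c + lslope H c).

Lemma flux_pairing_affine F H a b bF bH : a < b ->
  affine_on F a b bF -> affine_on H a b bH ->
  flux_pairing F H a b [::] = - (bF * bH * (b - a)).
Proof.
move=> ab AF AH; rewrite /flux_pairing big_nil (rslope_affine ab AH).
rewrite (lslope_affine ab AH); case: AF => al Fa.
by rewrite !Fa ?lexx ?ltW //; ring.
Qed.

Lemma flux_pairing_split F H a b c Q : c \notin Q ->
  flux_pairing F H a b (c :: Q) =
  flux_pairing F H a c [seq x <- Q | x < c]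
  + flux_pairing F H c b [seq x <- Q | c < x].
Proof.
move=> cQ; rewrite /flux_pairing big_cons (bigID (fun x => x < c)) /= !big_filter.
have -> : \sum_(x <- Q | ~~ (x < c)) F x * (rslope H x + lslope H x) =
          \sum_(x <- Q | c < x) F x * (rslope H x + lslope H x).
  rewrite big_seq_cond [RHS]big_seq_cond; apply: eq_bigl => x.
  case xQ: (x \in Q) => //=; rewrite -leNgt le_eqVlt.
  by have /negPf -> : c != x by apply: contraNneq cQ => ->.
ring.
Qed.

Lemma flux_pairingC F H Q a b : a < b -> uniq Q -> {in Q, forall c, a < c < b} ->
  pw_affine F Q a b -> pw_affine H Q a b ->
  flux_pairing F H a b Q = flux_pairing H F a b Q.
Proof.
have base a' b' : a' < b' -> pw_affine F [::] a' b' -> pw_affine H [::] a' b' ->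
    flux_pairing F H a' b' [::] = flux_pairing H F a' b' [::].
  move=> ab FQ HQ; have nobreak : {in [::], forall c : R, ~~ (a' < c < b')} by [].
  have [bF AF] := FQ a' b' (lexx _) ab (lexx _) nobreak.
  have [bH AH] := HQ a' b' (lexx _) ab (lexx _) nobreak.
  by rewrite (flux_pairing_affine ab AF AH) (flux_pairing_affine ab AH AF) (mulrC bF).
elim: {Q}(size Q) {-2}Q (leqnn (size Q)) a b => [|n IH] [|c Q] //= szQ a b ab;
  try by move=> *; apply: base.
move=> /andP [cQ uQ] inQ FQ HQ.
have /andP [ac cb] : a < c < b by apply: inQ; rewrite inE eqxx.
have inQ' : {in Q, forall x, a < x < b} by move=> x xQ; apply: inQ; rewrite inE xQ orbT.
have sz P : (size [seq x <- Q | P x] <= n)%N.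
  by rewrite size_filter; exact: leq_trans (count_size _ _) szQ.
have lft K : pw_affine K (c :: Q) a b -> pw_affine K [seq x <- Q | x < c] a c.
  by move/(pw_affine_l (ltW cb)); rewrite /= ltxx.
have rgt K : pw_affine K (c :: Q) a b -> pw_affine K [seq x <- Q | c < x] c b.
  by move/(pw_affine_r (ltW ac)); rewrite /= ltxx.
rewrite !flux_pairing_split //; congr (_ + _).
- apply: (IH _ (sz (fun x => x < c)) a c ac (filter_uniq _ uQ) _ (lft _ FQ) (lft _ HQ)).
  by move=> x; rewrite mem_filter => /andP [xc /inQ' /andP [-> _]].
- apply: (IH _ (sz (fun x => c < x)) c b cb (filter_uniq _ uQ) _ (rgt _ FQ) (rgt _ HQ)).
  by move=> x; rewrite mem_filter => /andP [cx /inQ' /andP [_ ->]]; rewrite cx.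
Qed.

End PiecewiseAffine.

Section GreenIdentity.
Variables (R : realType) (G : mgraph R).
Hypothesis len_gt0 : forall e : edge G, 0 < len e.
Implicit Types (f g : gpoint G -> R) (P : seq (gpoint G)) (m : seq (R * gpoint G)).
Implicit Types (e : edge G) (v : vert G) (x y z : gpoint G).

Lemma pt_src e : pt e 0 = PV (src e).
Proof. by rewrite /pt eqxx. Qed.

Lemma pt_tgt e : pt e (len e) = PV (tgt e).
Proof. by rewrite /pt (gt_eqF (len_gt0 e)) eqxx. Qed.

Lemma pt_inner e c : 0 < c < len e -> pt e c = PE e c.
Proof. by case/andP => c0 cL; rewrite /pt (gt_eqF c0) (lt_eqF cL). Qed.

Lemma pt_eq_PE e t e' c : pt e t = PE e' c -> e = e' /\ t = c.
Proof. by rewrite /pt; case: eqP => _ //; case: eqP => _ // [-> ->]. Qed.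

Lemma valid_pt e t : 0 <= t <= len e -> valid_point (pt e t).
Proof.
rewrite le_eqVlt => /andP [/predU1P [<-|t0]]; first by rewrite pt_src.
rewrite le_eqVlt => /predU1P [->|tL]; first by rewrite pt_tgt.
have tI : 0 < t < len e by rewrite t0.
by rewrite pt_inner.
Qed.

Definition all_valid P := forall x, List.In x P -> valid_point x.

Lemma all_valid_cat P1 P2 : all_valid P1 -> all_valid P2 -> all_valid (P1 ++ P2).
Proof. by move=> v1 v2 x /(List.in_app_or _ _ _) [/v1|/v2]. Qed.

Definition pw_linear f P := forall e a b, 0 <= a -> a < b -> b <= len e ->
  (forall c, a < c < b -> ~ List.In (PE e c) P) ->
  exists be, affine_on (fun t => f (pt e t)) a b be.

Lemma pw_linear_sub f P1 P2 : (forall x, List.In x P1 -> List.In x P2) ->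
  pw_linear f P1 -> pw_linear f P2.
Proof. by move=> P12 fP e a b a0 ab bL P2c; apply: fP => // c /P2c + /P12. Qed.

(* The paper's [sigma_x(f)], i.e. [- Delta f] at [x]. *)
Definition flux f (x : gpoint G) : R :=
  match x with
  | PV v => \sum_(e | src e == v) rslope (fun t => f (pt e t)) 0
            + \sum_(e | tgt e == v) lslope (fun t => f (pt e t)) (len e)
  | PE e c => rslope (fun u => f (pt e u)) c + lslope (fun u => f (pt e u)) c
  end.

Definition edge_coord e (x : gpoint G) : option R :=
  if x is PE e' c then (if e' == e then Some c else None) else None.

Definition edge_breaks P e := undup (pmap (edge_coord e) P).

Lemma mem_edge_breaks P e c : c \in edge_breaks P e <-> List.In (PE e c) P.
Proof.
rewrite /edge_breaks mem_undup; elim: P => [|[v|e' c'] P [IH1 IH2]] //=.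
  by split => [/IH1|[//|/IH2]] //; right.
case: eqP => [->|ne] /=; last by split => [/IH1|[[/ne]|/IH2]] //; right.
rewrite inE; split => [/predU1P [->|/IH1]|[[->]|/IH2 ->]]; rewrite ?eqxx ?orbT //;
  by [left | right].
Qed.

Lemma edge_breaks_inner P e : all_valid P -> {in edge_breaks P e, forall c, 0 < c < len e}.
Proof. by move=> vP c /mem_edge_breaks /vP. Qed.

Lemma pw_linear_edge f P e : pw_linear f P ->
  pw_affine (fun t => f (pt e t)) (edge_breaks P e) 0 (len e).
Proof.
move=> fP a b a0 ab bL Pab; apply: fP => // c cab /mem_edge_breaks cP.
by have := Pab c cP; rewrite cab.
Qed.

Definition pairing P f (mu : gpoint G -> R) :=
  \sum_v f (PV v) * mu (PV v)
  + \sum_e \sum_(c <- edge_breaks P e) f (PE e c) * mu (PE e c).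

Lemma sum_by_endpoint (X : edge G -> R) (h : vert G -> R) (s : edge G -> vert G) :
  \sum_v h v * \sum_(e | s e == v) X e = \sum_e h (s e) * X e.
Proof.
under eq_bigr do rewrite mulr_sumr.
rewrite (exchange_big_dep xpredT) //=; apply: eq_bigr => e _.
by rewrite (big_pred1 (s e)) // => v; rewrite /= eq_sym.
Qed.

Lemma pairing_flux_edges f g P : all_valid P ->
  pairing P f (flux g) = \sum_e flux_pairing (fun t => f (pt e t))
                           (fun t => g (pt e t)) 0 (len e) (edge_breaks P e).
Proof.
move=> vP; rewrite /pairing /=.
under eq_bigr do rewrite mulrDr.
rewrite big_split /= !sum_by_endpoint -!big_split /=; apply: eq_bigr => e _.
rewrite /flux_pairing pt_src pt_tgt; congr (_ + _).
rewrite big_seq [RHS]big_seq; apply: eq_bigr => c cP.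
by rewrite pt_inner //; apply: edge_breaks_inner cP.
Qed.

Lemma pairing_fluxC f g P : all_valid P -> pw_linear f P -> pw_linear g P ->
  pairing P f (flux g) = pairing P g (flux f).
Proof.
move=> vP fP gP; rewrite !pairing_flux_edges //; apply: eq_bigr => e _.
by apply: flux_pairingC; rewrite ?undup_uniq //;
  [exact: edge_breaks_inner | exact: pw_linear_edge | exact: pw_linear_edge].
Qed.

(* Finitely supported signed measures [sum_i w_i delta_{p_i}], as lists of
   pairs [(w_i, p_i)]. *)
Definition msum m f := \sum_(wp <- m) wp.1 * f wp.2.

Definition mass m x := msum m (fun p => ind R (p = x)).

Definition has_laplacian f m :=
  [/\ all_valid (map snd m), pw_linear f (map snd m)
    & forall x, valid_point x -> flux f x = - mass m x].

Definition dipole (y z : gpoint G) : seq (R * gpoint G) := [:: (1, y); (-1, z)].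

Lemma msum_dipole y z f : msum (dipole y z) f = f y - f z.
Proof. by rewrite /msum !big_cons big_nil /= mul1r mulN1r addr0. Qed.

Lemma indT (Q : Prop) : Q -> ind R Q = 1.
Proof. by move=> q; rewrite /ind asboolT. Qed.

Lemma indF (Q : Prop) : ~ Q -> ind R Q = 0.
Proof. by move=> q; rewrite /ind asboolF. Qed.

Lemma ind_PV u v : ind R (PV u = PV v :> gpoint G) = if u == v then 1 else 0.
Proof. by case: eqP => [->|uv]; [rewrite indT | rewrite indF // => -[]]. Qed.

Lemma pairing_lin P f w (a b : gpoint G -> R) :
  pairing P f (fun y => w * a y + b y) = w * pairing P f a + pairing P f b.
Proof.
have lin (I : Type) (r : seq I) (p : I -> gpoint G) :
    \sum_(i <- r) f (p i) * (w * a (p i) + b (p i))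
    = w * \sum_(i <- r) f (p i) * a (p i) + \sum_(i <- r) f (p i) * b (p i).
  by rewrite mulr_sumr -big_split; apply: eq_bigr => i _ /=; ring.
rewrite /pairing lin (eq_bigr _ (fun e _ => lin _ _ (PE e))) big_split /= -mulr_sumr.
ring.
Qed.

Lemma pairing0 P f : pairing P f (fun _ => 0) = 0.
Proof.
rewrite /pairing !big1 ?addr0 // => [e _|v _]; last by rewrite mulr0.
by rewrite big1 // => c _; rewrite mulr0.
Qed.

Lemma pairing_indicator f P x : List.In x P -> pairing P f (fun y => ind R (x = y)) = f x.
Proof.
rewrite /pairing; case: x => [u|e0 c0] xP.
  rewrite [X in _ + X]big1 ?addr0 => [|e _]; last first.
    by rewrite big1 // => c _; rewrite indF ?mulr0.
  rewrite (bigD1 u) //= indT ?mulr1 // big1 ?addr0 // => v vu.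
  by rewrite indF ?mulr0 // => -[uv]; rewrite uv eqxx in vu.
rewrite big1 ?add0r => [|v _]; last by rewrite indF ?mulr0.
rewrite (bigD1 e0) //= [X in _ + X]big1 ?addr0 => [|e ee]; last first.
  by rewrite big1 // => c _; rewrite indF ?mulr0 // => -[e0e]; rewrite e0e eqxx in ee.
have c0P : c0 \in edge_breaks P e0 by apply/mem_edge_breaks.
rewrite (big_rem c0) //= indT ?mulr1 // big_seq big1 ?addr0 // => c.
rewrite (mem_rem_uniq _ (undup_uniq _)) inE => /andP [cc0 _].
by rewrite indF ?mulr0 // => -[c0c]; rewrite c0c eqxx in cc0.
Qed.

Lemma pairing_mass f P m : (forall x, List.In x (map snd m) -> List.In x P) ->
  pairing P f (mass m) = msum m f.
Proof.
elim: m => [|[w x] m IH] mP.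
  have -> : mass [::] = fun _ => 0 by apply/funext => y; rewrite /mass /msum big_nil.
  by rewrite pairing0 /msum big_nil.
have -> : mass ((w, x) :: m) = fun y => w * ind R (x = y) + mass m y.
  by apply/funext => y; rewrite /mass /msum big_cons.
rewrite pairing_lin pairing_indicator; last by apply: mP; left.
by rewrite IH => [|y ym]; [rewrite /msum big_cons | apply: mP; right].
Qed.

Lemma pairing_flux_laplacian f g m P : has_laplacian g m -> all_valid P ->
  (forall x, List.In x (map snd m) -> List.In x P) ->
  pairing P f (flux g) = - msum m f.
Proof.
move=> [_ _ gm] vP mP.
have -> : pairing P f (flux g) = pairing P f (fun y => -1 * mass m y + 0).
  rewrite /pairing; congr (_ + _).
    by apply: eq_bigr => v _; rewrite gm // mulN1r addr0.
  apply: eq_bigr => e _; rewrite big_seq [RHS]big_seq; apply: eq_bigr => c cP.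
  by rewrite gm ?mulN1r ?addr0 //; apply: edge_breaks_inner cP.
by rewrite pairing_lin pairing0 pairing_mass // addr0 mulN1r.
Qed.

Theorem green f g mf mg : has_laplacian f mf -> has_laplacian g mg ->
  msum mg f = msum mf g.
Proof.
move=> Lf Lg; have [[vf fP _] [vg gP _]] := (Lf, Lg).
set P := map snd mf ++ map snd mg.
have vP : all_valid P by apply: all_valid_cat.
have sub_f x : List.In x (map snd mf) -> List.In x P.
  by move=> ?; apply: List.in_or_app; left.
have sub_g x : List.In x (map snd mg) -> List.In x P.
  by move=> ?; apply: List.in_or_app; right.
apply: oppr_inj; rewrite -(pairing_flux_laplacian f Lg vP sub_g).
rewrite -(pairing_flux_laplacian g Lf vP sub_f).
by apply: pairing_fluxC => //; [exact: pw_linear_sub fP | exact: pw_linear_sub gP].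
Qed.
End GreenIdentity.

Section BridgePotential.
Variables (R : realType) (G : mgraph R).
Hypothesis len_gt0 : forall e : edge G, 0 < len e.
Implicit Types (e : edge G) (v : vert G).

Lemma adj_wo_sym e : symmetric (adj_wo e).
Proof. by move=> u v; apply/existsP/existsP => -[e' H]; exists e'; rewrite orbC. Qed.

Lemma connect_wo_sym e u v : connect (adj_wo e) u v = connect (adj_wo e) v u.
Proof. exact: (sym_connect_sym (@adj_wo_sym e)). Qed.

Lemma connect_wo_edge e e' w : e' != e ->
  connect (adj_wo e) w (src e') = connect (adj_wo e) w (tgt e').
Proof.
move=> ne; have A : adj_wo e (src e') (tgt e').
  by apply/existsP; exists e'; rewrite ne !eqxx.
apply/idP/idP => C; apply: connect_trans C (connect1 _) => //.
by rewrite adj_wo_sym.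
Qed.

Lemma in_comp_endpoints e e' w u : e' != e -> in_comp e w (pt e' u) ->
  in_comp e w (PV (src e')) /\ in_comp e w (PV (tgt e')).
Proof.
move=> ne; rewrite /= -connect_wo_edge //.
suff C : in_comp e w (pt e' u) -> connect (adj_wo e) w (src e') by move=> /C.
rewrite /pt; case: eqP => _ //; case: eqP => [_ /=|_ [_ //]].
by rewrite connect_wo_edge.
Qed.

(* The voltage of a unit current entering at [pt e t] and leaving at [src e],
   when [e] is a bridge. *)
Definition bridge_potential e (t : R) (x : gpoint G) : R :=
  match x with
  | PV v => if connect (adj_wo e) (tgt e) v then t else 0
  | PE e' u => if e' == e then (if u <= t then u else t)
               else if connect (adj_wo e) (tgt e) (src e') then t else 0
  end.

Variables (e : edge G) (t : R).
Hypotheses (br : bridge e) (tI : 0 <= t <= len e).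

Local Notation chi := (bridge_potential e t).

Lemma bridge_potential_src : chi (PV (src e)) = 0.
Proof. by rewrite /= connect_wo_sym (negbTE br). Qed.

Lemma bridge_potential_on u : 0 <= u <= len e ->
  chi (pt e u) = if u <= t then u else t.
Proof.
move=> /andP [u0 uL]; have /andP [t0 tL] := tI; rewrite /pt.
case: eqP => [->|_]; first by rewrite bridge_potential_src t0.
case: eqP => [->|_]; last by rewrite /= eqxx.
by rewrite /= connect0; case: ifP => // Lt; apply/eqP; rewrite eq_le Lt tL.
Qed.

Lemma bridge_potential_off e' u : e' != e -> 0 <= u <= len e' ->
  chi (pt e' u) = if connect (adj_wo e) (tgt e) (src e') then t else 0.
Proof.
move=> ne _; rewrite /pt; case: eqP => _ //.
by case: eqP => _; rewrite /= ?(negbTE ne) // -connect_wo_edge.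
Qed.

Lemma bridge_potential_affine_below a b : 0 <= a -> b <= t ->
  affine_on (fun u => chi (pt e u)) a b 1.
Proof.
move=> a0 bt; exists 0 => u /andP [au ub]; have /andP [_ tL] := tI.
rewrite bridge_potential_on ?(le_trans a0 au) ?(le_trans ub (le_trans bt tL)) //.
by rewrite (le_trans ub bt) add0r mul1r.
Qed.

Lemma bridge_potential_affine_above a b : t <= a -> b <= len e ->
  affine_on (fun u => chi (pt e u)) a b 0.
Proof.
move=> ta bL; exists t => u /andP [au ub]; have /andP [t0 _] := tI.
rewrite bridge_potential_on ?(le_trans t0 (le_trans ta au)) ?(le_trans ub bL) //.
rewrite mul0r addr0; case: ifP => // ut; apply/eqP.
by rewrite eq_le ut (le_trans ta au).
Qed.

Lemma bridge_potential_affine_off e' : e' != e ->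
  affine_on (fun u => chi (pt e' u)) 0 (len e') 0.
Proof.
move=> ne; exists (if connect (adj_wo e) (tgt e) (src e') then t else 0) => u uI.
by rewrite bridge_potential_off // mul0r addr0.
Qed.

Lemma bridge_potential_pw_linear : pw_linear chi [:: pt e t; PV (src e)].
Proof.
move=> e' a b a0 ab; case: (eqVneq e' e) => [->|ne] bL Pab; last first.
  by exists 0; apply: affine_on_sub a0 bL (bridge_potential_affine_off ne).
case: (leP t a) => ta; first by exists 0; apply: bridge_potential_affine_above.
case: (leP b t) => bt; first by exists 1; apply: bridge_potential_affine_below.
exfalso; apply: (Pab t); first by rewrite ta bt.
by left; rewrite pt_inner // (le_lt_trans a0 ta) (lt_le_trans bt bL).
Qed.

Lemma flux_bridge_potential_vertex v :
  flux chi (PV v) = ind R (PV (src e) = PV v) - ind R (pt e t = PV v).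
Proof.
rewrite /= (sumr_single (i0 := e)) => [|e' ne]; last first.
  by rewrite (rslope_affine (len_gt0 e') (bridge_potential_affine_off ne)).
rewrite (sumr_single (i0 := e)) => [|e' ne]; last first.
  by rewrite (lslope_affine (len_gt0 e') (bridge_potential_affine_off ne)) oppr0.
have /andP [t0 tL] := tI.
have [t_0|tn0] := eqVneq t 0.
  have above : affine_on (fun u => chi (pt e u)) 0 (len e) 0.
    by apply: bridge_potential_affine_above; rewrite ?t_0.
  rewrite (rslope_affine (len_gt0 e) above) (lslope_affine (len_gt0 e) above).
  by rewrite t_0 pt_src subrr oppr0 !if_same addr0.
have t_gt0 : 0 < t by rewrite lt_def tn0 t0.
rewrite (rslope_affine t_gt0 (bridge_potential_affine_below (lexx _) (lexx _))) ind_PV.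
have [t_L|tLn] := eqVneq t (len e).
  have below : affine_on (fun u => chi (pt e u)) 0 (len e) 1.
    by apply: bridge_potential_affine_below; rewrite ?t_L.
  rewrite (lslope_affine (len_gt0 e) below) t_L (pt_tgt len_gt0) ind_PV.
  by case: (src e == v); case: (tgt e == v); rewrite ?addr0 ?subr0.
have t_ltL : t < len e by rewrite lt_def eq_sym tLn tL.
rewrite (lslope_affine t_ltL (bridge_potential_affine_above (lexx _) (lexx _))).
by rewrite pt_inner ?t_gt0 // indF // subr0 oppr0 if_same addr0.
Qed.

Lemma flux_bridge_potential_edge e' c : 0 < c < len e' ->
  flux chi (PE e' c) = ind R (PV (src e) = PE e' c) - ind R (pt e t = PE e' c).
Proof.
move=> /andP [c0 cL] /=; rewrite [ind R (PV _ = _)]indF // sub0r.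
have [ee|ne] := eqVneq e' e; last first.
  have A := bridge_potential_affine_off ne.
  rewrite (rslope_affine cL (affine_on_sub (ltW c0) (lexx _) A)).
  rewrite (lslope_affine c0 (affine_on_sub (lexx _) (ltW cL) A)) oppr0 addr0.
  by rewrite indF ?oppr0 // => /pt_eq_PE [ee _]; rewrite ee eqxx in ne.
subst e'; have /andP [t0 tL] := tI.
case: (ltgtP c t) => ct.
- rewrite (rslope_affine ct (bridge_potential_affine_below (ltW c0) (lexx _))).
  rewrite (lslope_affine c0 (bridge_potential_affine_below (lexx _) (ltW ct))).
  by rewrite indF ?subrr ?oppr0 // => /pt_eq_PE [_ tc]; rewrite tc ltxx in ct.
- rewrite (rslope_affine cL (bridge_potential_affine_above (ltW ct) (lexx _))).
  rewrite (lslope_affine ct (bridge_potential_affine_above (lexx _) (ltW cL))).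
  by rewrite indF ?oppr0 ?addr0 // => /pt_eq_PE [_ tc]; rewrite tc ltxx in ct.
- subst c.
  rewrite (rslope_affine cL (bridge_potential_affine_above (lexx _) (lexx _))).
  rewrite (lslope_affine c0 (bridge_potential_affine_below (lexx _) (lexx _))).
  by rewrite pt_inner ?c0 // indT // add0r.
Qed.

Lemma bridge_potential_src_side x : in_comp e (src e) x -> chi x = 0.
Proof.
have nC v : connect (adj_wo e) (src e) v -> ~~ connect (adj_wo e) (tgt e) v.
  apply: contraTN => tv; apply: contra br => sv.
  by apply: connect_trans sv _; rewrite connect_wo_sym.
by case: x => [v|e' u] /= => [/nC/negbTE -> | [/negbTE -> /nC/negbTE ->]].
Qed.

Lemma bridge_potential_tgt_side x : in_comp e (tgt e) x -> chi x = t.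
Proof. by case: x => [v|e' u] /= => [-> | [/negbTE -> ->]]. Qed.

Lemma bridge_potential_laplacian : has_laplacian chi (dipole (pt e t) (PV (src e))).
Proof.
split; [|exact: bridge_potential_pw_linear|].
- by move=> x [<-|[<-|[]]]; first exact: valid_pt.
- move=> [v|e' c] vx; rewrite /mass msum_dipole opprB.
    exact: flux_bridge_potential_vertex.
  exact: flux_bridge_potential_edge.
Qed.

End BridgePotential.

Section EdgeTent.
Variables (R : realType) (G : mgraph R).
Hypothesis len_gt0 : forall e : edge G, 0 < len e.
Implicit Types (e : edge G) (v : vert G).

(* The voltage of a unit current entering at the point [s] of [e] and leaving
   through both endpoints of [e], which are held at potential 0. *)
Definition edge_tent e (s : R) (x : gpoint G) : R :=
  match x with
  | PV _ => 0
  | PE e' u => if e' == e then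
                 (if u <= s then u * (len e - s) / len e else s * (len e - u) / len e)
               else 0
  end.

Definition edge_tent_measure e (s : R) : seq (R * gpoint G) :=
  [:: (1, PE e s); (- (1 - s / len e), PV (src e)); (- (s / len e), PV (tgt e))].

Lemma msum_edge_tent_measure e s f : msum (edge_tent_measure e s) f =
  f (PE e s) - (1 - s / len e) * f (PV (src e)) - s / len e * f (PV (tgt e)).
Proof. by rewrite /msum !big_cons big_nil /=; ring. Qed.

Variables (e : edge G) (s : R).
Hypothesis sI : 0 < s < len e.

Local Notation tent := (edge_tent e s).

Lemma edge_tent_on u : 0 <= u <= len e -> tent (pt e u) =
  if u <= s then u * (len e - s) / len e else s * (len e - u) / len e.
Proof.
move=> /andP [u0 uL]; have /andP [s0 sL] := sI; rewrite /pt.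
case: eqP => [->|_]; first by rewrite (ltW s0) !mul0r.
case: eqP => [->|_]; last by rewrite /= eqxx.
by rewrite leNgt sL /= subrr mulr0 mul0r.
Qed.

Lemma edge_tent_off e' u : e' != e -> tent (pt e' u) = 0.
Proof.
by move=> ne; rewrite /pt; case: eqP => _ //; case: eqP => _; rewrite //= (negbTE ne).
Qed.

Lemma edge_tent_affine_below a b : 0 <= a -> b <= s ->
  affine_on (fun u => tent (pt e u)) a b ((len e - s) / len e).
Proof.
move=> a0 bs; exists 0 => u /andP [au ub]; have /andP [_ sL] := sI.
have us : u <= s := le_trans ub bs.
rewrite edge_tent_on ?(le_trans a0 au) ?(le_trans us (ltW sL)) // us.
by rewrite add0r; ring.
Qed.

Lemma edge_tent_affine_above a b : s <= a -> b <= len e ->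
  affine_on (fun u => tent (pt e u)) a b (- (s / len e)).
Proof.
move=> sa bL; exists s => u /andP [au ub]; have /andP [s0 _] := sI.
have Ln : len e != 0 by rewrite gt_eqF.
rewrite edge_tent_on ?(le_trans (ltW s0) (le_trans sa au)) ?(le_trans ub bL) //.
case: ifP => us; last by field.
have -> : u = s by apply/eqP; rewrite eq_le us (le_trans sa au).
by field.
Qed.

Lemma edge_tent_affine_off e' : e' != e ->
  affine_on (fun u => tent (pt e' u)) 0 (len e') 0.
Proof. by move=> ne; exists 0 => u _; rewrite edge_tent_off // mul0r addr0. Qed.

Lemma edge_tent_pw_linear : pw_linear tent [:: PE e s; PV (src e); PV (tgt e)].
Proof.
move=> e' a b a0 ab; have [-> bL Pab|ne bL _] := eqVneq e' e; last first.
  by exists 0; apply: affine_on_sub a0 bL (edge_tent_affine_off ne).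
case: (leP s a) => sa; first by eexists; apply: edge_tent_affine_above.
case: (leP b s) => bs; first by eexists; apply: edge_tent_affine_below.
by exfalso; apply: (Pab s); [rewrite sa bs | left].
Qed.

Lemma flux_edge_tent_vertex v : flux tent (PV v) =
  (1 - s / len e) * ind R (PV (src e) = PV v) + s / len e * ind R (PV (tgt e) = PV v).
Proof.
have /andP [s0 sL] := sI; have Ln : len e != 0 by rewrite gt_eqF.
rewrite /= (sumr_single (i0 := e)) => [|e' ne]; last first.
  by rewrite (rslope_affine (len_gt0 e') (edge_tent_affine_off ne)).
rewrite (sumr_single (i0 := e)) => [|e' ne]; last first.
  by rewrite (lslope_affine (len_gt0 e') (edge_tent_affine_off ne)) oppr0.
rewrite (rslope_affine s0 (edge_tent_affine_below (lexx _) (lexx _))).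
rewrite (lslope_affine sL (edge_tent_affine_above (lexx _) (lexx _))) !ind_PV.
by case: (_ == v); case: (_ == v); field.
Qed.

Lemma flux_edge_tent_edge e' c : 0 < c < len e' ->
  flux tent (PE e' c) = - ind R (PE e s = PE e' c).
Proof.
move=> /andP [c0 cL] /=; have [ee|ne] := eqVneq e' e; last first.
  have A := edge_tent_affine_off ne.
  rewrite (rslope_affine cL (affine_on_sub (ltW c0) (lexx _) A)).
  rewrite (lslope_affine c0 (affine_on_sub (lexx _) (ltW cL) A)) oppr0 addr0.
  by rewrite indF ?oppr0 // => -[ee _]; rewrite ee eqxx in ne.
subst e'; have /andP [s0 sL] := sI.
case: (ltgtP c s) => cs.
- rewrite (rslope_affine cs (edge_tent_affine_below (ltW c0) (lexx _))).
  rewrite (lslope_affine c0 (edge_tent_affine_below (lexx _) (ltW cs))).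
  by rewrite indF ?subrr ?oppr0 // => -[sc]; rewrite sc ltxx in cs.
- rewrite (rslope_affine cL (edge_tent_affine_above (ltW cs) (lexx _))).
  rewrite (lslope_affine cs (edge_tent_affine_above (lexx _) (ltW cL))).
  by rewrite indF ?oppr0 ?opprK ?addNr // => -[sc]; rewrite sc ltxx in cs.
- subst c; have Ln : len e != 0 by rewrite gt_eqF.
  rewrite (rslope_affine cL (edge_tent_affine_above (lexx _) (lexx _))).
  rewrite (lslope_affine c0 (edge_tent_affine_below (lexx _) (lexx _))) indT //.
  by field.
Qed.

Lemma edge_tent_laplacian : has_laplacian tent (edge_tent_measure e s).
Proof.
split; [|exact: edge_tent_pw_linear|].
- by move=> x [<-|[<-|[<-|[]]]].
- move=> [v|e' c] vx; rewrite /mass msum_edge_tent_measure.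
    by rewrite flux_edge_tent_vertex [ind R (PE _ _ = _)]indF //; ring.
  by rewrite flux_edge_tent_edge // ![ind R (PV _ = _)]indF //; ring.
Qed.

End EdgeTent.

Section Voltage.
Variables (R : realType) (G : mgraph R) (j : gpoint G -> gpoint G -> gpoint G -> R).
Hypotheses (len_gt0 : forall e : edge G, 0 < len e) (vj : voltage_fun j).
Implicit Types (f : gpoint G -> R) (m : seq (R * gpoint G)).

Lemma voltage_normalized y z : valid_point y -> valid_point z -> j z z y = 0.
Proof. by move=> vy vz; have [] := vj vy vz. Qed.

Lemma voltage_laplacian y z : valid_point y -> valid_point z ->
  has_laplacian (fun x => j z x y) (dipole y z).
Proof.
move=> vy vz; have [_ _ j_aff j_vert j_edge] := vj vy vz; split.
- by move=> x [<-|[<-|[]]].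
- move=> e a b a0 ab bL Pab; have [|al [be jab]] := j_aff e a b a0 ab bL.
    move=> c /[dup] cab /andP [ac cb].
    rewrite pt_inner ?(le_lt_trans a0 ac) ?(lt_le_trans cb bL) //.
    by split => cyz; apply: (Pab c cab); rewrite cyz; [left | right; left].
  by exists be, al.
- by move=> [v|e c] vx; rewrite /mass msum_dipole /= ?j_vert ?j_edge // opprB.
Qed.

Lemma voltage_repr f m w z : has_laplacian f m -> valid_point w -> valid_point z ->
  f z - f w = msum m (fun p => j w p z).
Proof.
by move=> Lf vw vz; rewrite -msum_dipole (green len_gt0 Lf (voltage_laplacian vz vw)).
Qed.

Lemma voltage_exchange a b c d : valid_point a -> valid_point b ->
  valid_point c -> valid_point d -> j a c b - j a d b = j d b c - j d a c.
Proof.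
move=> va vb vc vd.
by rewrite (voltage_repr (voltage_laplacian vb va) vd vc) msum_dipole.
Qed.

Lemma voltageC s x y : valid_point s -> valid_point x -> valid_point y ->
  j s x y = j s y x.
Proof.
move=> vs vx vy; have := voltage_exchange vs vy vx vs.
by rewrite !voltage_normalized // !subr0.
Qed.

Lemma resistC x y : valid_point x -> valid_point y -> resist j x y = resist j y x.
Proof.
move=> vx vy; have := voltage_exchange vy vx vy vx.
by rewrite /resist !voltage_normalized // !sub0r => /oppr_inj.
Qed.

Lemma voltage_resist s x y : valid_point s -> valid_point x -> valid_point y ->
  j s x y = (resist j s x + resist j s y - resist j x y) / 2.
Proof.
move=> vs vx vy.
have E1 := voltage_exchange vs vy vy vx.
have E2 := voltage_exchange vs vx vx vy.
have E3 := voltage_exchange vx vy vs vy.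
have := resistC vs vx; have := resistC vs vy; have := resistC vx vy.
rewrite /resist (voltageC vs vy vx) (voltageC vy vs vx) (voltage_normalized vs vy)
  in E1 E2 E3 *.
lra.
Qed.

Lemma gmuD_tauD tau (a : vert G -> int) x y : degD a != (-2)%R ->
  valid_point x -> valid_point y ->
  gmuD j tau a x y = tauD j tau a x y - resist j x y / 2.
Proof.
move=> hd vx vy.
rewrite /gmuD /tauD /rD.
under eq_bigr do rewrite voltage_resist //.
set d := (degD a)%:~R.
have d2 : d + 2 != 0 by rewrite /d -[2]/(2%:~R) -intrD intr_eq0 addr_eq0.
have -> : \sum_i (a i)%:~R * ((resist j (PV i) x + resist j (PV i) y - resist j x y) / 2)
  = (\sum_s (a s)%:~R * resist j (PV s) x + \sum_s (a s)%:~R * resist j (PV s) y) / 2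
    - d * resist j x y / 2.
  rewrite /d /degD rmorph_sum -big_split /= !mulr_suml -sumrB.
  by apply: eq_bigr => s _; ring.
by field.
Qed.

Lemma resist_bridge_potential e t w : bridge e -> 0 <= t <= len e -> valid_point w ->
  resist j (pt e t) w = t + resist j (PV (src e)) w - 2 * bridge_potential e t w.
Proof.
move=> br tI vw; set x := pt e t; set p : gpoint G := PV (src e).
have vx : valid_point x := valid_pt len_gt0 tI.
have vp : valid_point p := I.
have L := bridge_potential_laplacian len_gt0 br tI.
have Ex := voltage_repr L vw vx; have Ep := voltage_repr L vw vp.
rewrite !msum_dipole bridge_potential_src // /x bridge_potential_on // lexx in Ex Ep.
rewrite /resist (voltageC vw vx vp) in Ep *; lra.
Qed.

Lemma resist_src_side e t w : bridge e -> 0 <= t <= len e -> valid_point w ->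
  src_between e t w -> resist j (pt e t) w = t + resist j (PV (src e)) w.
Proof.
move=> br tI vw [->|C]; first by rewrite pt_src add0r.
by rewrite resist_bridge_potential // bridge_potential_src_side // mulr0 subr0.
Qed.

Lemma resist_tgt_side e t w : bridge e -> 0 <= t <= len e -> valid_point w ->
  tgt_between e t w -> resist j (pt e t) w = len e - t + resist j (PV (tgt e)) w.
Proof.
move=> br tI vw [->|C]; first by rewrite pt_tgt // subrr add0r.
have LI : 0 <= len e <= len e by rewrite lexx ltW.
have := resist_bridge_potential br LI vw; rewrite pt_tgt // => ->.
by rewrite resist_bridge_potential // !bridge_potential_tgt_side //; ring.
Qed.

Lemma resist_same_bridge e t s : bridge e -> 0 <= t <= len e -> 0 <= s <= len e ->
  resist j (pt e t) (pt e s) = `|t - s|.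
Proof.
move=> br tI sI; have vy := valid_pt len_gt0 sI.
rewrite resist_bridge_potential // bridge_potential_on // (@resistC (PV _) _ I vy).
rewrite resist_bridge_potential // bridge_potential_src // /resist voltage_normalized //.
by case: leP => st; [rewrite ger0_norm ?subr_ge0 | rewrite ltr0_norm ?subr_lt0]; lra.
Qed.

Lemma resist_edge_point e s v : 0 <= s <= len e ->
  resist j (pt e s) (PV v) =
  s * (len e - s) / len e + (1 - s / len e) * resist j (PV (src e)) (PV v)
  + s / len e * resist j (PV (tgt e)) (PV v)
  - s / len e * (1 - s / len e) * resist j (PV (src e)) (PV (tgt e)).
Proof.
move=> /andP [s0 sL]; have Ln : len e != 0 by rewrite gt_eqF.
have [->|sn0] := eqVneq s 0; first by rewrite pt_src !mul0r subr0; ring.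
have [->|sLn] := eqVneq s (len e); first by rewrite pt_tgt // divff // subrr; ring.
have sI : 0 < s < len e by rewrite !lt_def sn0 s0 sL eq_sym sLn.
rewrite pt_inner //; set y := PE e s; set w : gpoint G := PV v.
set p : gpoint G := PV (src e); set q : gpoint G := PV (tgt e); set sg := s / len e.
have [vy vw vp vq] : [/\ valid_point y, valid_point w, valid_point p & valid_point q] by [].
have tent_repr z : valid_point z ->
    edge_tent e s z = j w y z - (1 - sg) * j w p z - sg * j w q z.
  move=> vz; have := voltage_repr (edge_tent_laplacian len_gt0 sI) vw vz.
  by rewrite msum_edge_tent_measure /= subr0.
have := tent_repr y vy; have := tent_repr p vp; have := tent_repr q vq.
rewrite /= eqxx lexx /resist (voltageC vw vp vy) (voltageC vw vq vy) (voltageC vw vq vp).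
have := voltage_resist vw vp vq; rewrite (resistC vw vp) (resistC vw vq) /resist.
move=> Jpq Eq Ep Ey.
have jpy : j w y p = (1 - sg) * j w p p + sg * j w p q by lra.
have jqy : j w y q = (1 - sg) * j w p q + sg * j w q q by lra.
have jyy : j w y y = s * (len e - s) / len e + (1 - sg) * j w y p + sg * j w y q by lra.
by rewrite jyy jpy jqy Jpq /sg; field.
Qed.

Variables (tau : R) (a : vert G -> int).
Hypothesis deg_neq : degD a != (-2)%R.

Lemma gmuD_same_bridge e t s : bridge e -> 0 <= t <= len e -> 0 <= s <= len e ->
  gmuD j tau a (pt e t) (pt e s) = tauD j tau a (pt e t) (pt e s) - `|t - s| / 2.
Proof.
by move=> br tI sI; rewrite gmuD_tauD ?resist_same_bridge //; apply: valid_pt.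
Qed.

Lemma gmuD_two_bridges ei ej t s : ei != ej -> bridge ei -> bridge ej ->
  0 <= t <= len ei -> 0 <= s <= len ej ->
  let x := pt ei t in let y := pt ej s in
  let pi := PV (src ei) in let qi := PV (tgt ei) in
  let pj := PV (src ej) in let qj := PV (tgt ej) in
  let r := resist j in let g := gmuD j tau a in let tD := tauD j tau a in
  [/\ src_between ei t y -> src_between ej s x ->
        g x y = tD x y - (t + s + r pi pj) / 2,
      src_between ei t y -> tgt_between ej s x ->
        g x y = tD x y - (t - s + len ej + r pi qj) / 2,
      tgt_between ei t y -> src_between ej s x ->
        g x y = tD x y - (- t + s + len ei + r qi pj) / 2
    & tgt_between ei t y -> tgt_between ej s x ->
        g x y = tD x y - (- t - s + len ei + len ej + r qi qj) / 2].
Proof.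
move=> ne bi bj tI sI x y pi qi pj qj r g tD.
have [vx vy] : valid_point x /\ valid_point y by split; apply: valid_pt.
have ends_src : src_between ej s x -> src_between ej s pi /\ src_between ej s qi.
  by case=> [s0|/(in_comp_endpoints ne) [? ?]]; split; by [left | right].
have ends_tgt : tgt_between ej s x -> tgt_between ej s pi /\ tgt_between ej s qi.
  by case=> [sL|/(in_comp_endpoints ne) [? ?]]; split; by [left | right].
split=> Sx Sy; rewrite /g gmuD_tauD //; congr (_ - _ / 2); rewrite /r.
- rewrite (resist_src_side bi tI vy Sx) (@resistC pi y) //.
  by rewrite (resist_src_side bj sI _ (proj1 (ends_src Sy))) // (@resistC pj pi) //; ring.
- rewrite (resist_src_side bi tI vy Sx) (@resistC pi y) //.
  by rewrite (resist_tgt_side bj sI _ (proj1 (ends_tgt Sy))) // (@resistC qj pi) //; ring.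
- rewrite (resist_tgt_side bi tI vy Sx) (@resistC qi y) //.
  by rewrite (resist_src_side bj sI _ (proj2 (ends_src Sy))) // (@resistC pj qi) //; ring.
- rewrite (resist_tgt_side bi tI vy Sx) (@resistC qi y) //.
  by rewrite (resist_tgt_side bj sI _ (proj2 (ends_tgt Sy))) // (@resistC qj qi) //; ring.
Qed.

Lemma gmuD_bridge_edge ei ej t s : bridge ei ->
  0 <= t <= len ei -> 0 <= s <= len ej ->
  let x := pt ei t in let y := pt ej s in
  let pi := PV (src ei) in let qi := PV (tgt ei) in
  let pj := PV (src ej) in let qj := PV (tgt ej) in
  let Li := len ei in let Lj := len ej in
  let r := resist j in let g := gmuD j tau a in let tD := tauD j tau a in
  let T1 := s * (Lj - r pj qj + r pi qj - r pi pj) / Lj + t + r pi pj in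
  let T2 := s * (Lj - r pj qj + r qi qj - r qi pj) / Lj - t + Li + r qi pj in
  (in_comp ei (src ei) y ->
     g x y = tD x y + s ^+ 2 * (Lj - r pj qj) / (2 * Lj ^+ 2) - T1 / 2) /\
  (in_comp ei (tgt ei) y ->
     g x y = tD x y + s ^+ 2 * (Lj - r pj qj) / (2 * Lj ^+ 2) - T2 / 2).
Proof.
move=> bi tI sI x y pi qi pj qj Li Lj r g tD T1 T2.
have [vx vy] : valid_point x /\ valid_point y by split; apply: valid_pt.
have Lj_neq0 : Lj != 0 := lt0r_neq0 (len_gt0 ej).
split=> Cy; rewrite /g gmuD_tauD // /T1 /T2 /r.
- rewrite (resist_src_side bi tI vy (or_intror Cy)) (@resistC pi y) //.
  rewrite resist_edge_point // (@resistC pj pi) // (@resistC qj pi) //.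
  by rewrite /tD /Lj /pi /qi /pj /qj /y /x; field.
- rewrite (resist_tgt_side bi tI vy (or_intror Cy)) (@resistC qi y) //.
  rewrite resist_edge_point // (@resistC pj qi) // (@resistC qj qi) //.
  by rewrite /tD /Lj /Li /pi /qi /pj /qj /y /x; field.
Qed.

End Voltage.

Theorem theorem3p9 (R : realType) (G : mgraph R)
  (j : gpoint G -> gpoint G -> gpoint G -> R) (tau : R) (a : vert G -> int) :
  is_metrized_graph G -> adequate G ->
  voltage_fun j -> is_tau j tau ->
  degD a != (-2)%R ->
  let r := resist j in
  let g := gmuD j tau a in
  let tD := tauD j tau a in
  (* (1) x, y on the same bridge e *)
  (forall (e : edge G) (t s : R), bridge e ->
     0 <= t <= len e -> 0 <= s <= len e ->
     g (pt e t) (pt e s) = tD (pt e t) (pt e s) - `|t - s| / 2)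
  /\
  (* (2) x on e_i, y on e_j, e_i <> e_j, both bridges *)
  (forall (ei ej : edge G) (t s : R), ei != ej -> bridge ei -> bridge ej ->
     0 <= t <= len ei -> 0 <= s <= len ej ->
     let x := pt ei t in let y := pt ej s in
     let pi := PV (src ei) in let qi := PV (tgt ei) in
     let pj := PV (src ej) in let qj := PV (tgt ej) in
     [/\ src_between ei t y -> src_between ej s x ->
           g x y = tD x y - (t + s + r pi pj) / 2,
         src_between ei t y -> tgt_between ej s x ->
           g x y = tD x y - (t - s + len ej + r pi qj) / 2,
         tgt_between ei t y -> src_between ej s x ->
           g x y = tD x y - (- t + s + len ei + r qi pj) / 2
       & tgt_between ei t y -> tgt_between ej s x ->
           g x y = tD x y - (- t - s + len ei + len ej + r qi qj) / 2])
  /\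
  (* (3) x on the bridge e_i, y on the non-bridge e_j, e_i <> e_j *)
  (forall (ei ej : edge G) (t s : R), ei != ej -> bridge ei -> ~ bridge ej ->
     0 <= t <= len ei -> 0 <= s <= len ej ->
     let x := pt ei t in let y := pt ej s in
     let pi := PV (src ei) in let qi := PV (tgt ei) in
     let pj := PV (src ej) in let qj := PV (tgt ej) in
     let Li := len ei in let Lj := len ej in
     let T1 := s * (Lj - r pj qj + r pi qj - r pi pj) / Lj + t + r pi pj in
     let T2 := s * (Lj - r pj qj + r qi qj - r qi pj) / Lj - t + Li + r qi pj in
     (in_comp ei (src ei) y ->
        g x y = tD x y + s ^+ 2 * (Lj - r pj qj) / (2 * Lj ^+ 2) - T1 / 2) /\
     (in_comp ei (tgt ei) y ->
        g x y = tD x y + s ^+ 2 * (Lj - r pj qj) / (2 * Lj ^+ 2) - T2 / 2)).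
Proof.
(* Connectivity, adequacy and the value of [tau] play no role: the existence of
   the voltage functions is all that is used. *)
move=> [len_gt0 _ _] _ vj _ deg_neq r g tD; split; [|split].
- by move=> e t s; apply: gmuD_same_bridge.
- by move=> ei ej t s; apply: gmuD_two_bridges.
- by move=> ei ej t s _ bi _; apply: gmuD_bridge_edge.
Qed.
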